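(* For every integer $v\ge 1$ there is a polynomial $p_{v-1}(x)$ of degree $v-1$ with real coefficients such that for all integers $m\ge1$, $$S_{m,v}=(2m^2)^{-v}(m^2-1)\,p_{v-1}(m^2).$$ Its leading coefficient is $2^{v}\zeta(2v)$, and its constant term is $$p_{v-1}(0)=\frac{2^{v}}{(2v-1)!}\sum_{j=0}^{v-1}\pi^{2j}\,s(v,j)\,\Gamma(2v-2j)\,\zeta(2v-2j).$$
   Context: The Gardner–Fisher sum is $S_{m,v}=\left(\frac{\pi}{2m}\right)^{2v}\sum_{k=1}^{m-1}\sin^{-2v}\!\left(\frac{k\pi}{2m}\right)$. For integers $v\ge1$ and $0\le n\le v-1$, $s(v,n)$ denotes the $n$-th elementary symmetric polynomial evaluated at $1^2,2^2,\dots,(v-1)^2$, with $s(v,0)=1$. $\zeta$ is the Riemann zeta function. *)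

From Stdlib Require Import Reals List Arith Factorial ClassicalEpsilon.
Import ListNotations.
Open Scope R_scope.

Definition lsum (f : nat -> R) (l : list nat) : R :=
  fold_right (fun k acc => f k + acc) 0 l.

Definition GF_S (m v : nat) : R :=
  (PI / (2 * INR m)) ^ (2 * v) *
  lsum (fun k => / (sin (INR k * PI / (2 * INR m))) ^ (2 * v)) (seq 1 (m - 1)).

Fixpoint esym (l : list R) (n : nat) : R :=
  match l, n with
  | [], O => 1
  | [], S _ => 0
  | _ :: _, O => 1
  | x :: l', S n' => esym l' (S n') + x * esym l' n'
  end.

Definition s_sym (v n : nat) : R :=
  esym (map (fun i => INR i ^ 2) (seq 1 (v - 1))) n.

(* Riemann zeta at a natural argument s (meaningful for s >= 2):
   the sum of the series sum_{n>=1} 1/n^s. *)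
Definition zeta (s : nat) : R :=
  epsilon (inhabits 0) (fun l => infinite_sum (fun n => / INR (n + 1) ^ s) l).

Definition poly_eval (c : nat -> R) (d : nat) (x : R) : R :=
  lsum (fun i => c i * x ^ i) (seq 0 d).

(* The proof runs through the series G_p(x) = sum_{n in Z} (x + n pi)^(-p).
   (1) csc^2 x = G_2(x): iterate the duplication formula
       csc^2 u = (csc^2 (u/2) + csc^2 ((u+pi)/2)) / 4 and pass to the limit
       (Tannery's theorem), since 2^j sin (y / 2^j) -> y.
   (2) G_p' = -p G_(p+1), and (csc^(2k))'' = 2k(2k+1) csc^(2k+2) - 4k^2 csc^(2k);
       by induction on k, csc^(2k) = sum_j beta(k,j) G_(2k-2j) with explicit
       rational coefficients beta(k,j) built from s(k,j).
   (3) Up to sign, the numbers k pi/(2m) + n pi (0 < k < m, n in Z) are the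
       j pi/(2m) with j > 0 not divisible by m, each occurring once; hence
       sum_(0<k<m) G_(2s)(k pi/(2m)) = (2m/pi)^(2s) zeta(2s) (1 - m^(-2s)),
       computed by splitting zeta(2s) along residues modulo 2m.
   Summing (2) over the points of (3) writes S_(m,v) as a combination of the
   m^(2s) - 1, and dividing by m^2 - 1 gives the polynomial. *)

From Stdlib Require Import Reals List Arith Factorial.
From Stdlib Require Import Lra Lia ClassicalEpsilon.
From Coquelicot Require Import Coquelicot.
Import ListNotations.
Open Scope R_scope.

Fixpoint sum_lt (f : nat -> R) (n : nat) : R :=
  match n with O => 0 | S n' => sum_lt f n' + f n' end.

Lemma sum_lt_ext f g n : (forall i, (i < n)%nat -> f i = g i) -> sum_lt f n = sum_lt g n.
Proof.
  induction n as [|n IH]; simpl; intros H; auto.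
  rewrite IH by (intros; apply H; lia). rewrite H by lia; auto.
Qed.

Lemma sum_lt_plus f g n : sum_lt (fun i => f i + g i) n = sum_lt f n + sum_lt g n.
Proof. induction n; simpl; [lra|]. rewrite IHn; lra. Qed.

Lemma sum_lt_scal c f n : sum_lt (fun i => c * f i) n = c * sum_lt f n.
Proof. induction n; simpl; [lra|]. rewrite IHn; lra. Qed.

Lemma sum_lt_const c n : sum_lt (fun _ => c) n = c * INR n.
Proof. induction n; simpl sum_lt; [simpl; lra|]. rewrite IHn, S_INR; ring. Qed.

Lemma sum_lt_add f n m : sum_lt f (n + m) = sum_lt f n + sum_lt (fun i => f (n + i)%nat) m.
Proof.
  induction m as [|m IH]; simpl; [rewrite Nat.add_0_r; lra|].
  rewrite Nat.add_succ_r; simpl. rewrite IH; lra.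
Qed.

Lemma sum_lt_shift f n : sum_lt f (S n) = f O + sum_lt (fun i => f (S i)) n.
Proof. change (S n) with (1 + n)%nat. rewrite sum_lt_add. simpl. lra. Qed.

Lemma sum_lt_rev f n : sum_lt f n = sum_lt (fun i => f (n - 1 - i)%nat) n.
Proof.
  induction n as [|n IH]; [reflexivity|].
  change (sum_lt f (S n)) with (sum_lt f n + f n).
  rewrite sum_lt_shift. replace (S n - 1 - 0)%nat with n by lia.
  rewrite IH, Rplus_comm. f_equal. apply sum_lt_ext. intros i Hi. f_equal. lia.
Qed.

Lemma sum_lt_swap (F : nat -> nat -> R) n m :
  sum_lt (fun i => sum_lt (fun j => F i j) m) n = sum_lt (fun j => sum_lt (fun i => F i j) n) m.
Proof.
  induction n as [|n IH]; simpl.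
  - rewrite (sum_lt_const 0), Rmult_0_l; auto.
  - rewrite IH, <- sum_lt_plus. auto.
Qed.

Lemma sum_lt_trunc (F : nat -> R) n k : (k <= n)%nat ->
  sum_lt F k = sum_lt (fun j => if Nat.ltb j k then F j else 0) n.
Proof.
  intros H. replace n with (k + (n - k))%nat by lia. rewrite sum_lt_add.
  rewrite (sum_lt_ext _ (fun j => 0) (n - k)), sum_lt_const, Rmult_0_l, Rplus_0_r.
  - apply sum_lt_ext. intros i Hi. destruct (Nat.ltb_spec i k); [auto|lia].
  - intros i Hi. destruct (Nat.ltb_spec (k + i) k); [lia|auto].
Qed.

Lemma sum_lt_triangle (F : nat -> nat -> R) n :
  sum_lt (fun i => sum_lt (fun j => F i j) (n - i)) n =
  sum_lt (fun j => sum_lt (fun i => F i j) (n - j)) n.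
Proof.
  rewrite (sum_lt_ext _ (fun i => sum_lt (fun j => if Nat.ltb (i + j) n then F i j else 0) n)).
  - rewrite sum_lt_swap. apply sum_lt_ext. intros j Hj. rewrite (sum_lt_trunc _ n (n - j)) by lia.
    apply sum_lt_ext. intros i Hi.
    destruct (Nat.ltb_spec (i + j) n), (Nat.ltb_spec i (n - j)); auto; lia.
  - intros i Hi. rewrite (sum_lt_trunc _ n (n - i)) by lia.
    apply sum_lt_ext. intros j Hj.
    destruct (Nat.ltb_spec (i + j) n), (Nat.ltb_spec j (n - i)); auto; lia.
Qed.

Lemma sum_lt_block a M N :
  sum_lt a (N * M) = sum_lt (fun k => sum_lt (fun n => a (n * M + k)%nat) N) M.
Proof.
  induction N as [|N IH]; simpl; [rewrite (sum_lt_const 0); ring|].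
  rewrite Nat.add_comm, sum_lt_add, IH, <- sum_lt_plus. reflexivity.
Qed.

Lemma sum_lt_geom x n : (x - 1) * sum_lt (fun i => x ^ i) n = x ^ n - 1.
Proof. induction n; simpl sum_lt; [simpl; ring|]. rewrite Rmult_plus_distr_l, IHn. simpl. ring. Qed.

Lemma sum_lt_nonneg f n : (forall i, 0 <= f i) -> 0 <= sum_lt f n.
Proof. intros H; induction n; simpl; [lra|]. specialize (H n); lra. Qed.

Lemma sum_lt_le f g n : (forall i, (i < n)%nat -> f i <= g i) -> sum_lt f n <= sum_lt g n.
Proof.
  induction n; simpl; intros H; [lra|].
  assert (f n <= g n) by (apply H; lia).
  assert (sum_lt f n <= sum_lt g n) by (apply IHn; intros; apply H; lia). lra.
Qed.

Lemma sum_lt_mono f n m : (forall i, 0 <= f i) -> (n <= m)%nat -> sum_lt f n <= sum_lt f m.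
Proof.
  intros H Hnm. replace m with (n + (m - n))%nat by lia. rewrite sum_lt_add.
  pose proof (sum_lt_nonneg (fun i => f (n + i)%nat) (m - n) (fun i => H _)). lra.
Qed.

Lemma sum_lt_ge_term f M k : (forall i, 0 <= f i) -> (k < M)%nat -> f k <= sum_lt f M.
Proof.
  intros Hf Hk. apply (Rle_trans _ (sum_lt f (S k))); [|apply sum_lt_mono; auto].
  simpl. pose proof (sum_lt_nonneg f k Hf). lra.
Qed.

Lemma sum_lt_abs_le f n : Rabs (sum_lt f n) <= sum_lt (fun i => Rabs (f i)) n.
Proof.
  induction n; simpl; [rewrite Rabs_R0; lra|].
  eapply Rle_trans; [apply Rabs_triang|lra].
Qed.

Lemma lsum_seq f a n : lsum f (seq a n) = sum_lt (fun i => f (a + i)%nat) n.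
Proof.
  revert a. induction n as [|n IH]; intros a; [reflexivity|].
  simpl lsum. rewrite IH, sum_lt_shift, Nat.add_0_r. f_equal.
  apply sum_lt_ext. intros; f_equal; lia.
Qed.

Lemma is_lim_seq_sum_lt (u : nat -> nat -> R) (l : nat -> R) M :
  (forall k, (k < M)%nat -> is_lim_seq (u k) (l k)) ->
  is_lim_seq (fun N => sum_lt (fun k => u k N) M) (sum_lt l M).
Proof.
  induction M; intros H; simpl; [apply is_lim_seq_const|].
  apply is_lim_seq_plus'; [apply IHM; intros; apply H|apply H]; lia.
Qed.

Lemma is_derive_sum_lt (F F' : nat -> R -> R) n y :
  (forall j, (j < n)%nat -> is_derive (F j) y (F' j y)) ->
  is_derive (fun y => sum_lt (fun j => F j y) n) y (sum_lt (fun j => F' j y) n).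
Proof.
  induction n; intros H; simpl.
  - apply (is_derive_const (V := R_NormedModule) 0).
  - apply (is_derive_plus (K := R_AbsRing) (V := R_NormedModule)
             (fun y => sum_lt (fun j => F j y) n) (fun y => F n y)).
    + apply IHn; intros; apply H; lia.
    + apply H; lia.
Qed.

Lemma is_series_sum_lt a l : is_series a l <-> is_lim_seq (fun n => sum_lt a n) l.
Proof.
  assert (E : forall n, sum_n a n = sum_lt a (S n)).
  { induction n; [simpl; rewrite sum_O; lra|]. rewrite sum_Sn, IHn. reflexivity. }
  split; intros H.
  - apply is_lim_seq_incr_1. eapply is_lim_seq_ext; [|exact H]. exact E.
  - apply is_lim_seq_incr_1 in H. change (is_lim_seq (sum_n a) l).
    eapply is_lim_seq_ext; [|exact H]. intros n. symmetry. apply E.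
Qed.

Lemma sum_lt_le_series a l n : (forall i, 0 <= a i) -> is_series a l -> sum_lt a n <= l.
Proof.
  intros Ha H. apply is_series_sum_lt in H.
  assert (Hle : Rbar_le (sum_lt a n) l).
  { apply (is_lim_seq_le (fun _ => sum_lt a n) (fun k => sum_lt a (n + k)%nat)).
    - intros k. apply sum_lt_mono; [exact Ha|lia].
    - apply is_lim_seq_const.
    - apply (is_lim_seq_incr_n (fun k => sum_lt a k) n) in H. eapply is_lim_seq_ext; [|exact H].
      intros k; simpl; rewrite Nat.add_comm; reflexivity. }
  exact Hle.
Qed.

Lemma series_tail_abs_le (g B : nat -> R) K :
  (forall r, Rabs (g r) <= B r) -> ex_series B ->
  Rabs (Series g - sum_lt g K) <= Series B - sum_lt B K.
Proof.
  intros Hg HB.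
  assert (Hgex : ex_series g) by (apply (@ex_series_le R_AbsRing R_CompleteNormedModule _ B); auto).
  pose proof (proj1 (is_series_sum_lt _ _) (Series_correct _ Hgex)) as Hg1.
  pose proof (proj1 (is_series_sum_lt _ _) (Series_correct _ HB)) as HB1.
  assert (L1 : is_lim_seq (fun n => Rabs (sum_lt g (n + K) - sum_lt g K)) (Rabs (Series g - sum_lt g K))).
  { apply (is_lim_seq_abs _ (Series g - sum_lt g K)). apply is_lim_seq_minus'.
    - apply (is_lim_seq_incr_n (fun n => sum_lt g n) K). auto.
    - apply is_lim_seq_const. }
  assert (L2 : is_lim_seq (fun n => sum_lt B (n + K) - sum_lt B K) (Series B - sum_lt B K)).
  { apply is_lim_seq_minus'; [|apply is_lim_seq_const].
    apply (is_lim_seq_incr_n (fun n => sum_lt B n) K). auto. }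
  assert (Hle : Rbar_le (Rabs (Series g - sum_lt g K)) (Series B - sum_lt B K)).
  { eapply is_lim_seq_le; [|exact L1|exact L2]. intros n. simpl.
    rewrite Nat.add_comm, !sum_lt_add.
    replace (sum_lt g K + sum_lt (fun i => g (K + i)%nat) n - sum_lt g K)
      with (sum_lt (fun i => g (K + i)%nat) n) by ring.
    replace (sum_lt B K + sum_lt (fun i => B (K + i)%nat) n - sum_lt B K)
      with (sum_lt (fun i => B (K + i)%nat) n) by ring.
    eapply Rle_trans; [apply sum_lt_abs_le|]. apply sum_lt_le. auto. }
  exact Hle.
Qed.

Lemma Rabs_lim_le (u : nat -> R) l b N0 :
  (forall j, (N0 <= j)%nat -> Rabs (u j) <= b) -> Un_cv u l -> Rabs l <= b.
Proof.
  intros Hb Hu.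
  assert (Hle : Rbar_le (Rabs l) b).
  { apply (is_lim_seq_le (fun j => Rabs (u (j + N0)%nat)) (fun _ => b)).
    - intros j. apply Hb. lia.
    - apply (is_lim_seq_incr_n (fun j => Rabs (u j)) N0).
      apply (is_lim_seq_abs _ l). apply is_lim_seq_Reals, Hu.
    - apply is_lim_seq_const. }
  exact Hle.
Qed.

(* Tannery's theorem: dominated convergence for series whose number of terms grows. *)
Lemma tannery_cv (f : nat -> nat -> R) (g B : nat -> R) (N : nat -> nat) :
  (forall j r, (r < N j)%nat -> Rabs (f j r) <= B r) -> ex_series B ->
  (forall r, Un_cv (fun j => f j r) (g r)) ->
  (forall j, (j <= N j)%nat) ->
  Un_cv (fun j => sum_lt (f j) (N j)) (Series g).
Proof.
  intros Hb HB Hc HN eps He.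
  assert (HgB : forall r, Rabs (g r) <= B r).
  { intros r. apply (Rabs_lim_le (fun j => f j r) _ _ (S r)); auto.
    intros j Hj. apply Hb. pose proof (HN j). lia. }
  assert (HBn : forall r, 0 <= B r) by (intros r; eapply Rle_trans; [apply Rabs_pos|apply HgB]).
  pose proof (proj1 (is_series_sum_lt _ _) (Series_correct _ HB)) as HB1.
  apply is_lim_seq_Reals in HB1. destruct (HB1 (eps / 3)) as [K HK]; [lra|].
  assert (Tail : Series B - sum_lt B K < eps / 3).
  { specialize (HK K (le_n K)). unfold R_dist in HK. rewrite Rabs_minus_sym in HK.
    apply Rabs_lt_between in HK. lra. }
  assert (Hhead : Un_cv (fun j => sum_lt (f j) K) (sum_lt g K)).
  { apply is_lim_seq_Reals, (is_lim_seq_sum_lt (fun r j => f j r)).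
    intros r _. apply is_lim_seq_Reals, Hc. }
  destruct (Hhead (eps / 3)) as [J HJ]; [lra|].
  exists (Nat.max J K). intros j Hj. unfold R_dist.
  assert (HNK : (K <= N j)%nat) by (pose proof (HN j); lia).
  assert (A1 : Rabs (sum_lt (f j) K - sum_lt g K) < eps / 3) by (apply HJ; lia).
  assert (A2 : Rabs (sum_lt (fun i => f j (K + i)%nat) (N j - K)) <= Series B - sum_lt B K).
  { eapply Rle_trans; [apply sum_lt_abs_le|].
    eapply Rle_trans; [apply (sum_lt_le _ (fun i => B (K + i)%nat)); intros; apply Hb; lia|].
    pose proof (sum_lt_le_series B _ (K + (N j - K)) HBn (Series_correct _ HB)) as Hle.
    rewrite sum_lt_add in Hle. lra. }
  assert (A3 := series_tail_abs_le g B K HgB HB).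
  replace (N j) with (K + (N j - K))%nat by lia. rewrite sum_lt_add.
  replace (sum_lt (f j) K + sum_lt (fun i => f j (K + i)%nat) (N j - K) - Series g) with
    ((sum_lt (f j) K - sum_lt g K) + sum_lt (fun i => f j (K + i)%nat) (N j - K)
     - (Series g - sum_lt g K)) by ring.
  eapply Rle_lt_trans; [apply Rabs_triang|]. rewrite Rabs_Ropp.
  eapply Rle_lt_trans; [apply Rplus_le_compat_r, Rabs_triang|]. lra.
Qed.

Lemma ex_series_arith_subseq a l M k :
  (forall i, 0 <= a i) -> is_series a l -> (k < M)%nat ->
  ex_series (fun n => a (n * M + k)%nat).
Proof.
  intros Ha Hl Hk.
  destruct (ex_finite_lim_seq_incr (fun N => sum_lt (fun n => a (n * M + k)%nat) N) l) as [L HL].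
  - intros n. simpl. pose proof (Ha (n * M + k)%nat). lra.
  - intros N. eapply Rle_trans; [|apply (sum_lt_le_series a l (N * M) Ha Hl)].
    rewrite sum_lt_block.
    apply (sum_lt_ge_term (fun k0 => sum_lt (fun n => a (n * M + k0)%nat) N) M k); auto.
    intros; apply sum_lt_nonneg; auto.
  - exists L. apply is_series_sum_lt. exact HL.
Qed.

Lemma sum_lt_Series_arith_subseq a l M : (0 < M)%nat -> (forall i, 0 <= a i) -> is_series a l ->
  sum_lt (fun k => Series (fun n => a (n * M + k)%nat)) M = l.
Proof.
  intros HM Ha Hl.
  assert (H1 : is_lim_seq (fun N => sum_lt a (N * M)) l).
  { apply is_series_sum_lt in Hl.
    apply (is_lim_seq_subseq (fun n => sum_lt a n) l (fun N => (N * M)%nat)); auto.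
    intros P [N HN]. exists N. intros n Hn. apply HN. nia. }
  assert (H2 : is_lim_seq (fun N => sum_lt (fun k => sum_lt (fun n => a (n * M + k)%nat) N) M)
                 (sum_lt (fun k => Series (fun n => a (n * M + k)%nat)) M)).
  { apply (is_lim_seq_sum_lt (fun k N => sum_lt (fun n => a (n * M + k)%nat) N)). intros k Hk.
    apply is_series_sum_lt, Series_correct. apply (ex_series_arith_subseq a l); auto. }
  pose proof (is_lim_seq_ext _ _ _ (fun N => sum_lt_block a M N) H1) as H3.
  apply is_lim_seq_unique in H2, H3. rewrite H3 in H2. injection H2; auto.
Qed.

(** * The zeta function at even integers *)

Lemma is_series_telescope : is_series (fun n => / INR (n + 1) - / INR (n + 2)) 1.
Proof.
  apply is_series_sum_lt.
  assert (E : forall n, sum_lt (fun n => / INR (n + 1) - / INR (n + 2)) n = 1 - / INR (n + 1)).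
  { induction n; [simpl; lra|]. simpl sum_lt. rewrite IHn.
    replace (S n + 1)%nat with (n + 2)%nat by lia. lra. }
  eapply is_lim_seq_ext; [intros n; symmetry; apply E|].
  replace (Finite 1) with (Rbar_minus 1 0) by (simpl; f_equal; ring).
  apply is_lim_seq_minus'; [apply is_lim_seq_const|].
  replace (Finite 0) with (Rbar_inv p_infty) by reflexivity.
  apply is_lim_seq_inv; [|discriminate].
  apply (is_lim_seq_incr_n INR 1). apply is_lim_seq_INR.
Qed.

Lemma inv_pow_telescope_bound p n : (2 <= p)%nat ->
  0 < / INR (n + 1) ^ p <= 2 * (/ INR (n + 1) - / INR (n + 2)).
Proof.
  intros Hp. assert (H1 : 1 <= INR (n + 1)) by (rewrite plus_INR; simpl; pose proof (pos_INR n); lra).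
  assert (H2 : INR (n + 2) = INR (n + 1) + 1) by (rewrite !plus_INR; simpl; lra).
  split; [apply Rinv_0_lt_compat, pow_lt; lra|].
  rewrite H2. set (x := INR (n + 1)) in *.
  assert (x ^ 2 <= x ^ p).
  { replace p with (2 + (p - 2))%nat by lia. rewrite pow_add.
    assert (1 <= x ^ (p - 2)) by (apply pow_R1_Rle; lra). assert (0 < x ^ 2) by (apply pow_lt; lra). nra. }
  assert (/ x ^ p <= / x ^ 2) by (apply Rinv_le_contravar; [apply pow_lt; lra|lra]).
  assert (/ x ^ 2 <= 2 * (/ x - / (x + 1))).
  { replace (2 * (/ x - / (x + 1))) with (/ x ^ 2 + (x - 1) / (x ^ 2 * (x + 1))) by (field; lra).
    assert (0 <= (x - 1) / (x ^ 2 * (x + 1))).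
    { apply Rdiv_le_0_compat; [lra|]. assert (0 < x ^ 2) by (apply pow_lt; lra). nra. }
    lra. }
  lra.
Qed.

Lemma ex_series_inv_pow p : (2 <= p)%nat -> ex_series (fun n => / INR (n + 1) ^ p).
Proof.
  intros Hp.
  apply (@ex_series_le R_AbsRing R_CompleteNormedModule _ (fun n => 2 * (/ INR (n + 1) - / INR (n + 2)))).
  - intros n. destruct (inv_pow_telescope_bound p n Hp).
    change (Rabs (/ INR (n + 1) ^ p) <= 2 * (/ INR (n + 1) - / INR (n + 2))).
    rewrite Rabs_pos_eq; lra.
  - exists (2 * 1). exact (is_series_scal_l 2 _ 1 is_series_telescope).
Qed.

Lemma ex_series_inv_sq_scal C : ex_series (fun r => C * / INR (r + 1) ^ 2).
Proof.
  destruct (ex_series_inv_pow 2 ltac:(lia)) as [l Hl].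
  exists (C * l). exact (is_series_scal_l C _ l Hl).
Qed.

Lemma is_series_zeta p : (2 <= p)%nat -> is_series (fun n => / INR (n + 1) ^ p) (zeta p).
Proof.
  intros Hp. unfold zeta. apply is_series_Reals, epsilon_spec.
  destruct (ex_series_inv_pow p Hp) as [l Hl]. exists l. apply is_series_Reals; exact Hl.
Qed.

Lemma zeta_pos p : (2 <= p)%nat -> 0 < zeta p.
Proof.
  intros Hp.
  pose proof (sum_lt_le_series _ _ 1 (fun i => Rlt_le _ _ (proj1 (inv_pow_telescope_bound p i Hp)))
                (is_series_zeta p Hp)) as H.
  pose proof (proj1 (inv_pow_telescope_bound p 0 Hp)). simpl in *. lra.
Qed.

(** * The series G_p *)

(* [G p x] is sum_{n in Z} (x + n pi)^(-p), the terms n and -(n+1) being paired. *)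
Definition G_term (p : nat) (x : R) (n : nat) : R :=
  / (x + INR n * PI) ^ p + / (x - INR (S n) * PI) ^ p.
Definition G (p : nat) (x : R) : R := Series (G_term p x).

Lemma INR2 : INR 2 = 2.
Proof. simpl; lra. Qed.

Lemma pow_even_opp y s : (- y) ^ (2 * s) = y ^ (2 * s).
Proof. rewrite !pow_mult. f_equal. ring. Qed.

Section LatticeSum.
Variables s m : nat.
Hypothesis Hs : (1 <= s)%nat.
Hypothesis Hm : (1 <= m)%nat.
Let p := (2 * s)%nat.
Let a := fun i : nat => / INR (i + 1) ^ p.
Let M := (2 * m)%nat.
(* the part of zeta(p) over the integers congruent to r + 1 modulo 2m *)
Let residue_sum := fun r : nat => Series (fun n => a (n * M + r)%nat).

Lemma lattice_p_ge_2 : (2 <= p)%nat.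
Proof. unfold p; lia. Qed.

Lemma lattice_a_nonneg i : 0 <= a i.
Proof. unfold a. left. apply (proj1 (inv_pow_telescope_bound p i lattice_p_ge_2)). Qed.

Lemma is_series_lattice_a : is_series a (zeta p).
Proof. apply is_series_zeta, lattice_p_ge_2. Qed.

Lemma G_term_lattice i n : (i < m - 1)%nat ->
  G_term p (INR (1 + i) * PI / (2 * INR m)) n =
  (2 * INR m / PI) ^ p * (a (n * M + i)%nat + a (n * M + (M - i - 2))%nat).
Proof.
  intros Hi. assert (0 < INR m) by (apply lt_0_INR; lia). pose proof PI_RGT_0.
  unfold G_term, a, M. set (c := PI / (2 * INR m)).
  assert (Hc : c <> 0) by (unfold c; apply Rgt_not_eq, Rdiv_lt_0_compat; lra).
  assert (E1 : INR (1 + i) * PI / (2 * INR m) + INR n * PI = c * INR (n * (2 * m) + i + 1)).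
  { unfold c. rewrite !plus_INR, !mult_INR, INR2, INR_1. field. lra. }
  assert (E2 : INR (1 + i) * PI / (2 * INR m) - INR (S n) * PI =
               - (c * INR (n * (2 * m) + (2 * m - i - 2) + 1))).
  { assert (H1 : (n * (2 * m) + (2 * m - i - 2) + 1 + (i + 1) = n * (2 * m) + 2 * m)%nat) by lia.
    apply (f_equal INR) in H1. rewrite !plus_INR, !mult_INR, INR2, INR_1 in H1.
    unfold c. rewrite S_INR, !plus_INR, !mult_INR, INR2, INR_1, S_INR.
    replace (INR (2 * m - i - 2)) with (2 * INR m - INR i - 2) by lra. field. lra. }
  rewrite E1, E2. unfold p. rewrite pow_even_opp. fold p.
  rewrite !Rpow_mult_distr, !Rinv_mult, <- !(pow_inv c).
  replace (/ c) with (2 * INR m / PI) by (unfold c; field; lra). ring.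
Qed.

Lemma G_lattice i : (i < m - 1)%nat ->
  G p (INR (1 + i) * PI / (2 * INR m)) =
  (2 * INR m / PI) ^ p * (residue_sum i + residue_sum (M - i - 2)%nat).
Proof.
  intros Hi. unfold G, residue_sum. rewrite (Series_ext _ _ (fun n => G_term_lattice i n Hi)).
  rewrite Series_scal_l. f_equal.
  apply Series_plus; apply (ex_series_arith_subseq a (zeta p));
    auto using lattice_a_nonneg, is_series_lattice_a; unfold M; lia.
Qed.

Lemma residue_sum_last : residue_sum (M - 1)%nat = (/ INR M) ^ p * zeta p.
Proof.
  unfold residue_sum. rewrite <- (is_series_unique _ _ is_series_lattice_a), <- Series_scal_l.
  apply Series_ext. intros n.
  unfold a. rewrite pow_inv, <- Rinv_mult, <- Rpow_mult_distr. do 2 f_equal.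
  rewrite <- mult_INR. f_equal. unfold M. lia.
Qed.

Lemma residue_sum_mid : residue_sum (m - 1)%nat = (/ INR m) ^ p * (1 - (/ 2) ^ p) * zeta p.
Proof.
  pose proof (sum_lt_Series_arith_subseq a (zeta p) 2 ltac:(lia)
                lattice_a_nonneg is_series_lattice_a) as Hsum.
  simpl in Hsum.
  assert (E : Series (fun n => a (n * 2 + 1)%nat) = (/ 2) ^ p * zeta p).
  { rewrite <- (is_series_unique _ _ is_series_lattice_a), <- Series_scal_l.
    apply Series_ext. intros n.
    unfold a. rewrite pow_inv, <- Rinv_mult, <- Rpow_mult_distr. do 2 f_equal.
    replace 2 with (INR 2) by apply INR2. rewrite <- mult_INR. f_equal. lia. }
  assert (E2 : residue_sum (m - 1)%nat = (/ INR m) ^ p * Series (fun n => a (n * 2 + 0)%nat)).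
  { unfold residue_sum. rewrite <- Series_scal_l. apply Series_ext. intros n.
    unfold a. rewrite pow_inv, <- Rinv_mult, <- Rpow_mult_distr. do 2 f_equal.
    rewrite <- mult_INR. f_equal. unfold M. lia. }
  rewrite E2. rewrite E in Hsum.
  replace (Series (fun n => a (n * 2 + 0)%nat)) with (zeta p - (/ 2) ^ p * zeta p) by lra.
  ring.
Qed.

Lemma sum_residue_sum_split :
  sum_lt residue_sum M = sum_lt residue_sum (m - 1) + residue_sum (m - 1)%nat +
                         sum_lt (fun i => residue_sum (m + i)%nat) (m - 1) + residue_sum (M - 1)%nat.
Proof.
  replace M with ((m - 1) + (1 + ((m - 1) + 1)))%nat at 1 by (unfold M; lia).
  rewrite sum_lt_add, sum_lt_add. simpl. rewrite Nat.add_0_r, sum_lt_add. simpl.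
  replace (m - 1 + S (m - 1 + 0))%nat with (M - 1)%nat by (unfold M; lia).
  rewrite (sum_lt_ext (fun i => residue_sum (m - 1 + S i)%nat) (fun i => residue_sum (m + i)%nat));
    [lra|].
  intros i Hi; replace (m - 1 + S i)%nat with (m + i)%nat by lia; reflexivity.
Qed.

Lemma sum_G_lattice :
  sum_lt (fun i => G p (INR (1 + i) * PI / (2 * INR m))) (m - 1) =
  (2 / PI) ^ p * zeta p * (INR m ^ p - 1).
Proof.
  rewrite (sum_lt_ext _ (fun i => (2 * INR m / PI) ^ p * (residue_sum i + residue_sum (M - i - 2)%nat)))
    by (intros; apply G_lattice; auto).
  rewrite sum_lt_scal, sum_lt_plus, (sum_lt_rev (fun i => residue_sum (M - i - 2)%nat)).
  rewrite (sum_lt_ext (fun i => residue_sum (M - (m - 1 - 1 - i) - 2)%nat) (fun i => residue_sum (m + i)%nat)).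
  2:{ intros i Hi. replace (M - (m - 1 - 1 - i) - 2)%nat with (m + i)%nat by (unfold M; lia).
      reflexivity. }
  pose proof (sum_lt_Series_arith_subseq a (zeta p) M ltac:(unfold M; lia)
                lattice_a_nonneg is_series_lattice_a) as HIL.
  fold residue_sum in HIL.
  rewrite sum_residue_sum_split, residue_sum_mid, residue_sum_last in HIL.
  replace (sum_lt residue_sum (m - 1) + sum_lt (fun i => residue_sum (m + i)%nat) (m - 1)) with
    (zeta p - (/ INR m) ^ p * (1 - (/ 2) ^ p) * zeta p - (/ INR M) ^ p * zeta p) by lra.
  unfold M. rewrite mult_INR, INR2.
  assert (0 < INR m) by (apply lt_0_INR; lia). pose proof PI_RGT_0.
  unfold Rdiv. rewrite !Rinv_mult, !Rpow_mult_distr, !pow_inv.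
  assert (INR m ^ p <> 0) by (apply pow_nonzero; lra).
  assert (2 ^ p <> 0) by (apply pow_nonzero; lra).
  assert (PI ^ p <> 0) by (apply pow_nonzero; lra).
  field. auto.
Qed.

End LatticeSum.

Lemma inv_pow_abs_bound z p d r : (2 <= p)%nat -> 0 < d -> d * INR (r + 1) <= Rabs z ->
  Rabs (/ z ^ p) <= / d ^ p * / INR (r + 1) ^ 2.
Proof.
  intros Hp Hd Hz.
  assert (H1 : 1 <= INR (r + 1)) by (rewrite plus_INR; simpl; pose proof (pos_INR r); lra).
  assert (Hz0 : 0 < Rabs z) by nra.
  rewrite Rabs_inv, <- RPow_abs.
  assert (INR (r + 1) ^ 2 <= INR (r + 1) ^ p) by (apply Rle_pow; auto).
  assert (Hpow : (d * INR (r + 1)) ^ p <= Rabs z ^ p) by (apply pow_incr; nra).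
  rewrite Rpow_mult_distr in Hpow.
  assert (0 < d ^ p) by (apply pow_lt; lra).
  assert (0 < INR (r + 1) ^ 2) by (apply pow_lt; lra).
  rewrite <- Rinv_mult. apply Rinv_le_contravar; [apply Rmult_lt_0_compat; auto|].
  eapply Rle_trans; [|exact Hpow]. apply Rmult_le_compat_l; lra.
Qed.

Lemma G_term_bound p y r d : (2 <= p)%nat -> 0 < d -> d <= y <= PI - d ->
  Rabs (G_term p y r) <= 2 * / d ^ p * / INR (r + 1) ^ 2.
Proof.
  intros Hp Hd Hy. pose proof PI_RGT_0. unfold G_term.
  eapply Rle_trans; [apply Rabs_triang|].
  assert (HI : INR (r + 1) = INR r + 1) by (rewrite plus_INR; simpl; lra).
  pose proof (pos_INR r).
  assert (A : Rabs (/ (y + INR r * PI) ^ p) <= / d ^ p * / INR (r + 1) ^ 2).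
  { apply inv_pow_abs_bound; auto. rewrite Rabs_pos_eq by nra. rewrite HI. nra. }
  assert (B : Rabs (/ (y - INR (S r) * PI) ^ p) <= / d ^ p * / INR (r + 1) ^ 2).
  { apply inv_pow_abs_bound; auto. rewrite S_INR, Rabs_left by nra. rewrite HI. nra. }
  lra.
Qed.

Lemma ex_series_G_term p y : (2 <= p)%nat -> 0 < y < PI -> ex_series (G_term p y).
Proof.
  intros Hp Hy. set (d := Rmin y (PI - y)).
  assert (0 < d) by (unfold d; apply Rmin_glb_lt; lra).
  apply (@ex_series_le R_AbsRing R_CompleteNormedModule _ (fun r => (2 * / d ^ p) * / INR (r + 1) ^ 2)).
  - intros r. apply G_term_bound; auto.
    assert (d <= y) by apply Rmin_l. assert (d <= PI - y) by apply Rmin_r. lra.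
  - apply ex_series_inv_sq_scal.
Qed.

(** * The partial fraction expansion of csc^2 *)

Lemma sin_neq_0_0_PI t : 0 < t < PI -> sin t <> 0.
Proof. intros. apply Rgt_not_eq, sin_gt_0; lra. Qed.

Lemma sin_cubic_bounds t : 0 <= t -> t - t ^ 3 / 6 <= sin t <= t.
Proof.
  intros Ht. split.
  - destruct (Rle_lt_dec t PI) as [Hle|Hgt].
    + pose proof (sin_bound t 0 Ht Hle) as [H _]. unfold sin_approx, sin_term in H. simpl in H. lra.
    + pose proof PI2_3_2. pose proof (SIN_bound t).
      assert (t ^ 3 - 6 * t - 6 >= 0) by (simpl; nra). lra.
  - destruct (Req_dec t 0) as [->|H0]; [rewrite sin_0; lra|].
    left; apply sin_lt_x; lra.
Qed.

Lemma inv_sin2_doubling u : sin u <> 0 ->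
  / sin u ^ 2 = / 4 * (/ sin (u / 2) ^ 2 + / sin ((u + PI) / 2) ^ 2).
Proof.
  intros H. replace ((u + PI) / 2) with (u / 2 + PI / 2) by field.
  rewrite sin_plus, sin_PI2, cos_PI2.
  replace u with (2 * (u / 2)) in H |- * at 1 by field. rewrite sin_2a in H |- *.
  assert (sin (u / 2) <> 0) by (intro E; apply H; rewrite E; ring).
  assert (cos (u / 2) <> 0) by (intro E; apply H; rewrite E; ring).
  replace (sin (u / 2) * 0 + cos (u / 2) * 1) with (cos (u / 2)) by ring.
  assert (E : sin (u / 2) ^ 2 + cos (u / 2) ^ 2 = 1)
    by (rewrite <- (sin2_cos2 (u / 2)); unfold Rsqr; ring).
  replace (/ (2 * sin (u / 2) * cos (u / 2)) ^ 2)
    with ((sin (u / 2) ^ 2 + cos (u / 2) ^ 2) / (2 * sin (u / 2) * cos (u / 2)) ^ 2)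
    by (rewrite E; field; split; auto).
  field. split; auto.
Qed.

Lemma inv_sin2_iter_doubling x j : 0 < x < PI ->
  / sin x ^ 2 = (/ 4) ^ j * sum_lt (fun r => / sin ((x + INR r * PI) / 2 ^ j) ^ 2) (2 ^ j).
Proof.
  intros Hx. pose proof PI_RGT_0. induction j as [|j IH].
  - simpl. replace ((x + 0 * PI) / 1) with x by field. ring.
  - assert (H2j : 0 < 2 ^ j) by (apply pow_lt; lra).
    rewrite IH, (sum_lt_ext _ (fun r => / 4 * (/ sin ((x + INR r * PI) / 2 ^ S j) ^ 2 +
                                 / sin ((x + INR (2 ^ j + r) * PI) / 2 ^ S j) ^ 2))).
    + rewrite sum_lt_scal, sum_lt_plus.
      replace (2 ^ S j)%nat with (2 ^ j + 2 ^ j)%nat by (simpl; lia). rewrite sum_lt_add.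
      simpl. ring.
    + intros r Hr.
      assert (Hr' : INR r + 1 <= 2 ^ j).
      { rewrite <- S_INR, <- INR2, <- pow_INR. apply le_INR. lia. }
      rewrite inv_sin2_doubling.
      * change (2 ^ S j) with (2 * 2 ^ j).
        replace ((x + INR r * PI) / 2 ^ j / 2) with ((x + INR r * PI) / (2 * 2 ^ j)) by (field; lra).
        replace (((x + INR r * PI) / 2 ^ j + PI) / 2) with ((x + INR (2 ^ j + r) * PI) / (2 * 2 ^ j));
          [reflexivity|].
        rewrite plus_INR, pow_INR, INR2. field. lra.
      * apply sin_neq_0_0_PI. pose proof (pos_INR r). split.
        -- apply Rdiv_lt_0_compat; nra.
        -- apply Rmult_lt_reg_r with (2 ^ j); auto.
           unfold Rdiv. rewrite Rmult_assoc, Rinv_l by lra. nra.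
Qed.

Definition scale (j : nat) : R := 2 ^ S j.

Lemma scale_pos j : 0 < scale j.
Proof. apply pow_lt; lra. Qed.

(* [j + 1] doublings, with the second half of the terms reflected through pi. *)
Definition scaled_G_term (x : R) (j r : nat) : R :=
  / (scale j * sin ((x + INR r * PI) / scale j)) ^ 2 +
  / (scale j * sin ((INR (S r) * PI - x) / scale j)) ^ 2.

Lemma inv_sin2_scaled_sum x j : 0 < x < PI -> / sin x ^ 2 = sum_lt (scaled_G_term x j) (2 ^ j).
Proof.
  intros Hx. rewrite (inv_sin2_iter_doubling x (S j) Hx). fold (scale j).
  replace (2 ^ S j)%nat with (2 ^ j + 2 ^ j)%nat by (simpl; lia). rewrite sum_lt_add.
  rewrite (sum_lt_rev (fun i => / sin ((x + INR (2 ^ j + i) * PI) / scale j) ^ 2)).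
  rewrite Rmult_plus_distr_l, <- !sum_lt_scal, <- sum_lt_plus.
  apply sum_lt_ext. intros r Hr. unfold scaled_G_term.
  assert (E : (/ 4) ^ S j = / scale j ^ 2).
  { unfold scale. rewrite <- pow_mult, pow_inv. f_equal. rewrite Nat.mul_comm, pow_mult. f_equal. lra. }
  rewrite E, !Rpow_mult_distr, !Rinv_mult. do 4 f_equal.
  replace ((x + INR (2 ^ j + (2 ^ j - 1 - r)) * PI) / scale j)
    with (PI - (INR (S r) * PI - x) / scale j); [apply sin_PI_x|].
  assert (HI : INR (2 ^ j + (2 ^ j - 1 - r)) = scale j - 1 - INR r).
  { assert (H2 : (2 ^ j + (2 ^ j - 1 - r) + 1 + r = 2 ^ j + 2 ^ j)%nat) by lia.
    apply (f_equal INR) in H2. rewrite !plus_INR, !pow_INR, INR2, INR_1 in H2.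
    rewrite plus_INR, pow_INR, INR2. unfold scale. simpl. lra. }
  rewrite HI, S_INR. pose proof (scale_pos j). field. lra.
Qed.

Lemma is_lim_seq_scale_sin y : 0 < y -> is_lim_seq (fun j => scale j * sin (y / scale j)) y.
Proof.
  intros Hy.
  apply (is_lim_seq_le_le (fun j => y - y ^ 3 / 6 * (/ 4) ^ S j) _ (fun _ => y)).
  - intros j. pose proof (scale_pos j).
    assert (Hyj : 0 <= y / scale j) by (apply Rdiv_le_0_compat; lra).
    destruct (sin_cubic_bounds (y / scale j) Hyj) as [H1 H2]. split.
    + replace ((/ 4) ^ S j) with (/ (scale j) ^ 2).
      2:{ unfold scale. rewrite <- pow_mult, pow_inv. f_equal.
          rewrite Nat.mul_comm, pow_mult. f_equal. lra. }
      apply Rmult_le_compat_l with (r := scale j) in H1; [|lra].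
      eapply Rle_trans; [|exact H1]. right. field. lra.
    + apply Rmult_le_compat_l with (r := scale j) in H2; [|lra].
      eapply Rle_trans; [exact H2|]. right. field. lra.
  - replace (Finite y) with (Rbar_minus y (y ^ 3 / 6 * 0)) by (simpl; f_equal; ring).
    assert (Hg : is_lim_seq (fun j => (/ 4) ^ S j) 0).
    { apply (is_lim_seq_incr_1 (fun n => (/ 4) ^ n)). apply is_lim_seq_geom.
      rewrite Rabs_pos_eq; lra. }
    apply is_lim_seq_minus'; [apply is_lim_seq_const|].
    exact (is_lim_seq_scal_l _ (y ^ 3 / 6) 0 Hg).
  - apply is_lim_seq_const.
Qed.

Lemma cv_inv_scale_sin2 y : 0 < y -> Un_cv (fun j => / (scale j * sin (y / scale j)) ^ 2) (/ y ^ 2).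
Proof.
  intros Hy. apply is_lim_seq_Reals.
  replace (Finite (/ y ^ 2)) with (Rbar_inv (y * (y * 1))) by (simpl; f_equal; field; lra).
  apply is_lim_seq_inv; [|intro E; injection E; intro; nra].
  simpl. apply (is_lim_seq_mult' _ _ y (y * 1)); [apply is_lim_seq_scale_sin; auto|].
  apply (is_lim_seq_mult' _ _ y 1); [apply is_lim_seq_scale_sin; auto|apply is_lim_seq_const].
Qed.

(* Uses sin t >= t/3 on [0, pi/2]. *)
Lemma inv_scale_sin2_bound y L : 0 < L -> 0 < y <= L * (PI / 2) ->
  0 <= / (L * sin (y / L)) ^ 2 <= 9 * / y ^ 2.
Proof.
  intros HL Hy. set (t := y / L).
  assert (Ht : 0 < t <= PI / 2).
  { unfold t. split; [apply Rdiv_lt_0_compat; lra|].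
    apply Rmult_le_reg_r with L; auto. unfold Rdiv. rewrite Rmult_assoc, Rinv_l by lra. lra. }
  pose proof PI2_3_2. pose proof PI_4.
  destruct (sin_cubic_bounds t ltac:(lra)) as [H1 _].
  assert (t ^ 2 <= 4) by (simpl; nra).
  assert (sin t >= t / 3) by (simpl in *; nra).
  assert (L * sin t >= y / 3).
  { unfold t in *. replace (y / 3) with (L * (y / L / 3)) by (field; lra). nra. }
  split; [apply Rlt_le, Rinv_0_lt_compat, pow_lt; lra|].
  replace (9 * / y ^ 2) with (/ (y / 3) ^ 2) by (field; lra).
  apply Rinv_le_contravar; [apply pow_lt; lra|apply pow_incr; lra].
Qed.

Lemma scaled_G_term_bound x j r : 0 < x < PI -> (r < 2 ^ j)%nat ->
  Rabs (scaled_G_term x j r) <= 9 * G_term 2 x r.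
Proof.
  intros Hx Hr. pose proof PI_RGT_0. unfold scaled_G_term, G_term.
  assert (Hr' : INR r + 1 <= 2 ^ j).
  { rewrite <- S_INR, <- INR2, <- pow_INR. apply le_INR. lia. }
  assert (HLj : scale j = 2 * 2 ^ j) by reflexivity.
  pose proof (pos_INR r).
  destruct (inv_scale_sin2_bound (x + INR r * PI) (scale j)) as [A1 A2];
    [apply scale_pos|rewrite HLj; split; nra|].
  destruct (inv_scale_sin2_bound (INR (S r) * PI - x) (scale j)) as [B1 B2];
    [apply scale_pos|rewrite HLj, S_INR; split; nra|].
  replace ((x - INR (S r) * PI) ^ 2) with ((INR (S r) * PI - x) ^ 2) by ring.
  rewrite Rabs_pos_eq by lra. lra.
Qed.

Lemma cv_scaled_G_term x r : 0 < x < PI -> Un_cv (fun j => scaled_G_term x j r) (G_term 2 x r).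
Proof.
  intros Hx. pose proof PI_RGT_0. pose proof (pos_INR r).
  unfold scaled_G_term, G_term. apply is_lim_seq_Reals.
  replace ((x - INR (S r) * PI) ^ 2) with ((INR (S r) * PI - x) ^ 2) by ring.
  apply is_lim_seq_plus'; apply is_lim_seq_Reals, cv_inv_scale_sin2; [nra|rewrite S_INR; nra].
Qed.

Lemma inv_sin2_G x : 0 < x < PI -> / sin x ^ 2 = G 2 x.
Proof.
  intros Hx.
  assert (HT : Un_cv (fun j => sum_lt (scaled_G_term x j) (2 ^ j)) (G 2 x)).
  { apply (tannery_cv _ (G_term 2 x) (fun r => 9 * G_term 2 x r) (fun j => 2 ^ j)%nat).
    - intros j r Hr. apply scaled_G_term_bound; auto.
    - apply (ex_series_scal_l (K := R_AbsRing) (V := R_NormedModule)), ex_series_G_term; auto.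
    - intros r. apply cv_scaled_G_term; auto.
    - intros j. pose proof (Nat.pow_gt_lin_r 2 j). lia. }
  assert (HC : Un_cv (fun j => sum_lt (scaled_G_term x j) (2 ^ j)) (/ sin x ^ 2)).
  { intros eps He. exists O. intros j _. rewrite <- inv_sin2_scaled_sum by auto.
    unfold R_dist. rewrite Rminus_diag, Rabs_R0. auto. }
  exact (UL_sequence _ _ _ HC HT).
Qed.

Lemma is_derive_inv_pow_shift c p y : y - c <> 0 ->
  is_derive (fun y => / (y - c) ^ p) y (- INR p * / (y - c) ^ (S p)).
Proof.
  intros H. auto_derive; [apply pow_nonzero; auto|].
  destruct p; [simpl; field; auto|].
  cbn [Init.Nat.pred]. replace (y + - c) with (y - c) by ring.
  assert ((y - c) ^ p <> 0) by (apply pow_nonzero; auto).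
  simpl pow. field. split; auto.
Qed.

Lemma is_derive_G_term p r y : 0 < y < PI ->
  is_derive (fun y => G_term p y r) y (- INR p * G_term (S p) y r).
Proof.
  intros Hy. pose proof (pos_INR r). pose proof PI_RGT_0. unfold G_term.
  replace (- INR p * (/ (y + INR r * PI) ^ S p + / (y - INR (S r) * PI) ^ S p)) with
    (plus (- INR p * / (y - (- (INR r * PI))) ^ S p) (- INR p * / (y - INR (S r) * PI) ^ S p))
    by (unfold plus; simpl; replace (y - - (INR r * PI)) with (y + INR r * PI) by ring; ring).
  apply (is_derive_ext (fun y => plus (/ (y - (- (INR r * PI))) ^ p) (/ (y - INR (S r) * PI) ^ p))).
  { intros t. unfold plus; simpl. replace (t - - (INR r * PI)) with (t + INR r * PI) by ring. reflexivity. }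
  apply (is_derive_plus (K := R_AbsRing) (V := R_NormedModule)); apply is_derive_inv_pow_shift.
  - nra.
  - rewrite S_INR. nra.
Qed.

Lemma G_partial_unif p c d eps : (2 <= p)%nat -> 0 < d -> 0 < eps ->
  exists N, forall n y, (N <= n)%nat -> d <= y <= PI - d ->
    Rabs (c * G p y - sum_lt (fun r => c * G_term p y r) n) < eps.
Proof.
  intros Hp Hd He.
  set (B := fun r => (Rabs c * (2 * / d ^ p)) * / INR (r + 1) ^ 2).
  assert (HBex : ex_series B) by apply ex_series_inv_sq_scal.
  pose proof (proj1 (is_series_sum_lt _ _) (Series_correct _ HBex)) as HB1.
  apply is_lim_seq_Reals in HB1. destruct (HB1 eps He) as [N HN].
  exists N. intros n y Hn Hy.
  assert (Hg : forall r, Rabs (c * G_term p y r) <= B r).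
  { intros r. unfold B. rewrite Rabs_mult, Rmult_assoc.
    apply Rmult_le_compat_l; [apply Rabs_pos|]. apply G_term_bound; auto. }
  unfold G. rewrite <- Series_scal_l.
  eapply Rle_lt_trans; [exact (series_tail_abs_le _ _ n Hg HBex)|].
  specialize (HN n Hn). unfold R_dist in HN. rewrite Rabs_minus_sym in HN.
  apply Rabs_lt_between in HN. lra.
Qed.

Lemma is_derive_G p x : (2 <= p)%nat -> 0 < x < PI -> is_derive (G p) x (- INR p * G (S p) x).
Proof.
  intros Hp Hx. pose proof PI_RGT_0.
  set (d0 := Rmin x (PI - x) / 2).
  assert (Hd0 : 0 < d0) by (unfold d0; apply Rdiv_lt_0_compat; [apply Rmin_glb_lt|]; lra).
  assert (Hd1 : d0 <= x / 2) by (unfold d0; pose proof (Rmin_l x (PI - x)); lra).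
  assert (Hd2 : d0 <= (PI - x) / 2) by (unfold d0; pose proof (Rmin_r x (PI - x)); lra).
  set (d := mkposreal d0 Hd0).
  assert (HB : forall y, Boule x d y -> d0 <= y <= PI - d0).
  { intros y Hy. unfold Boule in Hy. simpl in Hy. apply Rabs_def2 in Hy. lra. }
  apply is_derive_Reals.
  apply (CVU_derivable (fun n y => sum_lt (G_term p y) n)
           (fun n y => sum_lt (fun r => - INR p * G_term (S p) y r) n)
           (G p) (fun y => - INR p * G (S p) y) x d).
  - intros eps He. destruct (G_partial_unif (S p) (- INR p) d0 eps) as [N HN]; auto.
    exists N. intros n y Hn Hy. apply HN; auto.
  - intros y Hy. destruct (HB y Hy).
    apply is_lim_seq_Reals, is_series_sum_lt, Series_correct, ex_series_G_term; auto. lra.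
  - intros n y Hy. destruct (HB y Hy). apply is_derive_Reals.
    apply (is_derive_sum_lt (fun r y => G_term p y r) (fun r y => - INR p * G_term (S p) y r)).
    intros. apply is_derive_G_term. lra.
  - unfold Boule. simpl. rewrite Rminus_diag, Rabs_R0. auto.
Qed.

(** * Expanding csc^(2k) in the G_(2j) *)

Definition csc_pow (k : nat) (y : R) : R := / sin y ^ (2 * k).
Definition csc_pow' (k : nat) (y : R) : R := - (2 * INR k) * cos y * / sin y ^ (2 * k + 1).

Lemma is_derive_inv_sin_pow q y : 0 < y < PI ->
  is_derive (fun y => / sin y ^ q) y (- INR q * cos y * / sin y ^ (S q)).
Proof.
  intros Hy. assert (Hs : sin y <> 0) by (apply sin_neq_0_0_PI; auto).
  auto_derive; [apply pow_nonzero; auto|].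
  destruct q; [simpl; field; auto|].
  cbn [Init.Nat.pred]. assert (sin y ^ q <> 0) by (apply pow_nonzero; auto).
  simpl pow. field. split; auto.
Qed.

Lemma is_derive_cos_inv_sin_pow q y : 0 < y < PI ->
  is_derive (fun y => cos y * / sin y ^ q) y
    (- / sin y ^ q * sin y - INR q * cos y ^ 2 * / sin y ^ (S q)).
Proof.
  intros Hy. assert (Hs : sin y <> 0) by (apply sin_neq_0_0_PI; auto).
  auto_derive; [apply pow_nonzero; auto|].
  destruct q; [simpl; field; auto|].
  cbn [Init.Nat.pred]. assert (sin y ^ q <> 0) by (apply pow_nonzero; auto).
  simpl pow. field. split; auto.
Qed.

Lemma is_derive_csc_pow k y : 0 < y < PI -> is_derive (csc_pow k) y (csc_pow' k y).
Proof.
  intros Hy. unfold csc_pow, csc_pow'.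
  replace (- (2 * INR k) * cos y * / sin y ^ (2 * k + 1))
    with (- INR (2 * k) * cos y * / sin y ^ S (2 * k))
    by (rewrite mult_INR, INR2; replace (S (2 * k)) with (2 * k + 1)%nat by lia; reflexivity).
  apply is_derive_inv_sin_pow; auto.
Qed.

Lemma is_derive_csc_pow' k y : 0 < y < PI ->
  is_derive (csc_pow' k) y (2 * INR k * (2 * INR k + 1) * csc_pow (S k) y - 4 * INR k ^ 2 * csc_pow k y).
Proof.
  intros Hy. assert (Hs : sin y <> 0) by (apply sin_neq_0_0_PI; auto).
  assert (E : cos y ^ 2 = 1 - sin y ^ 2) by (rewrite <- (sin2_cos2 y); unfold Rsqr; ring).
  unfold csc_pow'.
  apply (is_derive_ext (fun y => - (2 * INR k) * (cos y * / sin y ^ (2 * k + 1))));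
    [intros t; exact (eq_sym (Rmult_assoc _ _ _))|].
  replace (2 * INR k * (2 * INR k + 1) * csc_pow (S k) y - 4 * INR k ^ 2 * csc_pow k y) with
    (- (2 * INR k) * (- / sin y ^ (2 * k + 1) * sin y
                      - INR (2 * k + 1) * cos y ^ 2 * / sin y ^ (S (2 * k + 1)))).
  { apply is_derive_scal, is_derive_cos_inv_sin_pow; auto. }
  unfold csc_pow. rewrite E, plus_INR, mult_INR, INR2, INR_1.
  replace (2 * S k)%nat with (S (S (2 * k))) by lia.
  replace (S (2 * k + 1)) with (S (S (2 * k))) by lia.
  replace (2 * k + 1)%nat with (S (2 * k)) by lia.
  assert (sin y ^ (2 * k) <> 0) by (apply pow_nonzero; auto).
  simpl pow. field. split; auto.
Qed.

Lemma is_derive_unique_0_PI (f g : R -> R) (f' g' y : R) : 0 < y < PI ->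
  (forall t, 0 < t < PI -> f t = g t) ->
  is_derive f y f' -> is_derive g y g' -> f' = g'.
Proof.
  intros Hy Heq Hf Hg.
  assert (Hg' : is_derive g y f').
  { apply (is_derive_ext_loc f g y f'); auto.
    assert (Hd : 0 < Rmin y (PI - y)) by (apply Rmin_glb_lt; lra).
    exists (mkposreal _ Hd). intros t Ht. apply Heq.
    change (Rabs (t - y) < Rmin y (PI - y)) in Ht. apply Rabs_def2 in Ht.
    pose proof (Rmin_l y (PI - y)). pose proof (Rmin_r y (PI - y)). lra. }
  apply is_derive_unique in Hg, Hg'. congruence.
Qed.

Lemma esym_0 l : esym l 0 = 1.
Proof. destruct l; reflexivity. Qed.

Lemma esym_snoc l x n : esym (l ++ [x]) (S n) = esym l (S n) + x * esym l n.
Proof.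
  revert n. induction l as [|y l IH]; intros n.
  - simpl. destruct n; simpl; ring.
  - simpl. rewrite IH. destruct n; [rewrite !esym_0; ring|]. rewrite IH. ring.
Qed.

Lemma esym_gt_length l n : (length l < n)%nat -> esym l n = 0.
Proof.
  revert n. induction l as [|y l IH]; intros n H; (destruct n; [simpl in H; lia|]); [reflexivity|].
  simpl in H |- *. rewrite !IH by lia. ring.
Qed.

Lemma s_sym_0 v : s_sym v 0 = 1.
Proof. apply esym_0. Qed.

Lemma s_sym_S k j : (1 <= k)%nat -> s_sym (S k) (S j) = s_sym k (S j) + INR k ^ 2 * s_sym k j.
Proof.
  intros Hk. unfold s_sym. replace (S k - 1)%nat with (S (k - 1)) by lia.
  rewrite seq_S, map_app. replace (1 + (k - 1))%nat with k by lia.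
  exact (esym_snoc (map (fun i => INR i ^ 2) (seq 1 (k - 1))) (INR k ^ 2) j).
Qed.

Lemma s_sym_diag k : (1 <= k)%nat -> s_sym k k = 0.
Proof. intros. unfold s_sym. apply esym_gt_length. rewrite length_map, length_seq. lia. Qed.

Definition csc_coef (v j : nat) : R :=
  4 ^ j * s_sym v j * INR (fact (2 * v - 2 * j - 1)) / INR (fact (2 * v - 1)).

Lemma INR_fact_SS n : INR (fact (S (S n))) = INR (S (S n)) * INR (S n) * INR (fact n).
Proof. change (fact (S (S n))) with (S (S n) * (S n * fact n))%nat. rewrite !mult_INR. ring. Qed.

Lemma INR_fact_pos n : 0 < INR (fact n).
Proof. apply lt_0_INR, lt_O_fact. Qed.

Lemma csc_coef_0 v : (1 <= v)%nat -> csc_coef v 0 = 1.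
Proof.
  intros. unfold csc_coef. rewrite s_sym_0.
  replace (2 * v - 2 * 0 - 1)%nat with (2 * v - 1)%nat by lia.
  pose proof (INR_fact_pos (2 * v - 1)). rewrite pow_O. field. lra.
Qed.

(* The recurrence imposed on the coefficients by the equation of [is_derive_csc_pow']. *)
Lemma csc_coef_rec k j : (1 <= k)%nat -> (j <= k)%nat ->
  csc_coef (S k) j * (2 * INR k * (2 * INR k + 1)) =
  csc_coef k j * (INR (2 * (k - j)) * INR (S (2 * (k - j)))) +
  match j with O => 0 | S j' => 4 * INR k ^ 2 * csc_coef k j' end.
Proof.
  intros Hk Hj. unfold csc_coef.
  replace (2 * S k - 1)%nat with (S (S (2 * k - 1))) by lia.
  rewrite INR_fact_SS.
  assert (E1 : INR (S (S (2 * k - 1))) = 2 * INR k + 1).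
  { replace (S (S (2 * k - 1))) with (2 * k + 1)%nat by lia. rewrite plus_INR, mult_INR, INR2, INR_1. ring. }
  assert (E2 : INR (S (2 * k - 1)) = 2 * INR k).
  { replace (S (2 * k - 1)) with (2 * k)%nat by lia. rewrite mult_INR, INR2. ring. }
  rewrite E1, E2.
  pose proof (INR_fact_pos (2 * k - 1)).
  assert (Hk0 : 0 < INR k) by (apply lt_0_INR; lia).
  destruct (Nat.eq_dec j k) as [->|Hne].
  - replace (2 * (k - k))%nat with O by lia. simpl INR at 3. destruct k; [lia|].
    rewrite s_sym_S, s_sym_diag by lia.
    replace (2 * S (S k) - 2 * S k - 1)%nat with 1%nat by lia.
    replace (2 * S k - 2 * k - 1)%nat with 1%nat by lia.
    simpl pow. pose proof (pos_INR k). field. repeat split; lra.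
  - replace (2 * S k - 2 * j - 1)%nat with (S (S (2 * k - 2 * j - 1))) by lia.
    rewrite INR_fact_SS.
    replace (INR (S (S (2 * k - 2 * j - 1)))) with (INR (S (2 * (k - j)))) by (f_equal; lia).
    replace (INR (S (2 * k - 2 * j - 1))) with (INR (2 * (k - j))) by (f_equal; lia).
    destruct j as [|j].
    + rewrite !s_sym_0. field. repeat split; lra.
    + rewrite s_sym_S by lia.
      replace (2 * k - 2 * j - 1)%nat with (S (S (2 * k - 2 * S j - 1))) by lia.
      rewrite INR_fact_SS.
      replace (INR (S (S (2 * k - 2 * S j - 1)))) with (INR (S (2 * (k - S j)))) by (f_equal; lia).
      replace (INR (S (2 * k - 2 * S j - 1))) with (INR (2 * (k - S j))) by (f_equal; lia).
      simpl pow. field. repeat split; lra.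
Qed.

Definition G_comb (k : nat) (y : R) : R := sum_lt (fun j => csc_coef k j * G (2 * (k - j)) y) k.
Definition G_comb' (k : nat) (y : R) : R :=
  sum_lt (fun j => csc_coef k j * (- INR (2 * (k - j)) * G (S (2 * (k - j))) y)) k.
Definition G_comb'' (k : nat) (y : R) : R :=
  sum_lt (fun j => csc_coef k j * (- INR (2 * (k - j)) *
                                   (- INR (S (2 * (k - j))) * G (S (S (2 * (k - j)))) y))) k.

Lemma is_derive_G_comb k y : 0 < y < PI -> is_derive (G_comb k) y (G_comb' k y).
Proof.
  intros Hy.
  apply (is_derive_sum_lt (fun j y => csc_coef k j * G (2 * (k - j)) y)
           (fun j y => csc_coef k j * (- INR (2 * (k - j)) * G (S (2 * (k - j))) y))).
  intros j Hj. apply is_derive_scal, is_derive_G; auto. lia.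
Qed.

Lemma is_derive_G_comb' k y : 0 < y < PI -> is_derive (G_comb' k) y (G_comb'' k y).
Proof.
  intros Hy.
  apply (is_derive_sum_lt (fun j y => csc_coef k j * (- INR (2 * (k - j)) * G (S (2 * (k - j))) y))
           (fun j y => csc_coef k j * (- INR (2 * (k - j)) *
                                       (- INR (S (2 * (k - j))) * G (S (S (2 * (k - j)))) y)))).
  intros j Hj. apply is_derive_scal, is_derive_scal, is_derive_G; auto. lia.
Qed.

Lemma G_comb_step k y : (1 <= k)%nat ->
  2 * INR k * (2 * INR k + 1) * G_comb (S k) y = G_comb'' k y + 4 * INR k ^ 2 * G_comb k y.
Proof.
  intros Hk. unfold G_comb at 1. rewrite <- sum_lt_scal.
  rewrite (sum_lt_ext _ (fun j => (csc_coef k j * (INR (2 * (k - j)) * INR (S (2 * (k - j)))))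
                                  * G (2 * (S k - j)) y +
                                  (match j with O => 0 | S j' => 4 * INR k ^ 2 * csc_coef k j' end)
                                  * G (2 * (S k - j)) y))
    by (intros j Hj; rewrite <- Rmult_plus_distr_r, <- csc_coef_rec by lia; ring).
  rewrite sum_lt_plus. f_equal.
  - change (sum_lt (fun j => (csc_coef k j * (INR (2 * (k - j)) * INR (S (2 * (k - j)))))
                             * G (2 * (S k - j)) y) k
            + (csc_coef k k * (INR (2 * (k - k)) * INR (S (2 * (k - k))))) * G (2 * (S k - k)) y
            = G_comb'' k y).
    replace (INR (2 * (k - k))) with 0 by (replace (2 * (k - k))%nat with O by lia; reflexivity).
    rewrite Rmult_0_l, Rmult_0_r, Rmult_0_l, Rplus_0_r.
    apply sum_lt_ext. intros j Hj.
    replace (2 * (S k - j))%nat with (S (S (2 * (k - j)))) by lia. ring.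
  - rewrite sum_lt_shift, Rmult_0_l, Rplus_0_l. unfold G_comb. rewrite <- sum_lt_scal.
    apply sum_lt_ext. intros j Hj. replace (2 * (S k - S j))%nat with (2 * (k - j))%nat by lia. ring.
Qed.

Lemma csc_pow_G_comb k : (1 <= k)%nat -> forall y, 0 < y < PI -> csc_pow k y = G_comb k y.
Proof.
  induction k as [|k IH]; intros Hk y Hy; [lia|].
  destruct (Nat.eq_dec k 0) as [->|Hk0].
  - unfold csc_pow, G_comb, csc_coef. simpl sum_lt. rewrite s_sym_0. simpl.
    rewrite <- inv_sin2_G by auto. simpl pow. field. apply sin_neq_0_0_PI; auto.
  - specialize (IH ltac:(lia)).
    assert (D1 : forall t, 0 < t < PI -> csc_pow' k t = G_comb' k t).
    { intros t Ht. apply (is_derive_unique_0_PI (csc_pow k) (G_comb k) _ _ t Ht IH);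
        [apply is_derive_csc_pow|apply is_derive_G_comb]; auto. }
    assert (D2 : 2 * INR k * (2 * INR k + 1) * csc_pow (S k) y - 4 * INR k ^ 2 * csc_pow k y
                 = G_comb'' k y).
    { apply (is_derive_unique_0_PI (csc_pow' k) (G_comb' k) _ _ y Hy D1);
        [apply is_derive_csc_pow'|apply is_derive_G_comb']; auto. }
    rewrite IH in D2 by auto.
    assert (Hkpos : 0 < INR k) by (apply lt_0_INR; lia).
    apply (Rmult_eq_reg_l (2 * INR k * (2 * INR k + 1))); [|apply Rgt_not_eq; nra].
    rewrite G_comb_step by lia. lra.
Qed.

Lemma GF_S_G_expansion m v : (1 <= v)%nat -> (1 <= m)%nat ->
  GF_S m v = sum_lt (fun j => (PI / (2 * INR m)) ^ (2 * v) * csc_coef v j *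
                       ((2 / PI) ^ (2 * (v - j)) * zeta (2 * (v - j)) * (INR m ^ (2 * (v - j)) - 1))) v.
Proof.
  intros Hv Hm. unfold GF_S. rewrite lsum_seq.
  pose proof PI_RGT_0. assert (Hm0 : 0 < INR m) by (apply lt_0_INR; lia).
  rewrite (sum_lt_ext _ (fun i => G_comb v (INR (1 + i) * PI / (2 * INR m)))).
  2:{ intros i Hi. rewrite <- csc_pow_G_comb; [reflexivity|auto|].
      assert (INR (1 + i) <= INR m) by (apply le_INR; lia).
      assert (0 < INR (1 + i)) by (apply lt_0_INR; lia).
      split; [apply Rdiv_lt_0_compat; nra|].
      apply Rmult_lt_reg_r with (2 * INR m); [lra|].
      unfold Rdiv. rewrite Rmult_assoc, Rinv_l by lra. nra. }
  unfold G_comb. rewrite sum_lt_swap, <- sum_lt_scal. apply sum_lt_ext. intros j Hj.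
  rewrite sum_lt_scal, sum_G_lattice by lia. ring.
Qed.

Lemma GF_scale M a j : M <> 0 ->
  (PI / (2 * M)) ^ (2 * (a + j)) * (2 / PI) ^ (2 * a) =
  / (2 * M ^ 2) ^ (a + j) * (2 ^ (a + j) * (/ 4) ^ j * PI ^ (2 * j)).
Proof.
  intros HM. pose proof PI_RGT_0.
  rewrite !pow_mult.
  replace ((PI / (2 * M)) ^ 2) with (PI ^ 2 * / 4 * / M ^ 2) by (field; auto).
  replace ((2 / PI) ^ 2) with (4 * / PI ^ 2) by (field; lra).
  rewrite !Rpow_mult_distr, !pow_inv, !pow_add.
  replace 4 with (2 ^ 2) by ring. rewrite <- !pow_mult.
  replace (2 * a)%nat with (a + a)%nat by lia. replace (2 * j)%nat with (j + j)%nat by lia.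
  rewrite !pow_add.
  assert (PI ^ a <> 0) by (apply pow_nonzero; lra).
  assert (PI ^ j <> 0) by (apply pow_nonzero; lra).
  assert (2 ^ a <> 0) by (apply pow_nonzero; lra).
  assert (2 ^ j <> 0) by (apply pow_nonzero; lra).
  assert ((M ^ 2) ^ a <> 0) by (apply pow_nonzero, pow_nonzero; auto).
  assert ((M ^ 2) ^ j <> 0) by (apply pow_nonzero, pow_nonzero; auto).
  assert (M ^ a <> 0) by (apply pow_nonzero; auto).
  assert (M ^ j <> 0) by (apply pow_nonzero; auto).
  field. repeat split; auto.
Qed.

Lemma poly_eval_partial_sums w v x :
  (x - 1) * poly_eval (fun i => sum_lt w (v - i)) v x = sum_lt (fun j => w j * (x ^ (v - j) - 1)) v.
Proof.
  unfold poly_eval. rewrite lsum_seq. simpl.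
  rewrite (sum_lt_ext _ (fun i => sum_lt (fun j => w j * x ^ i) (v - i))).
  2:{ intros i Hi. rewrite Rmult_comm, <- sum_lt_scal. apply sum_lt_ext. intros; ring. }
  rewrite sum_lt_triangle, <- sum_lt_scal. apply sum_lt_ext. intros j Hj.
  rewrite (sum_lt_scal (w j) (fun i => x ^ i)), <- sum_lt_geom. ring.
Qed.

Lemma poly_eval_0 c d : (1 <= d)%nat -> poly_eval c d 0 = c O.
Proof.
  intros Hd. destruct d as [|d]; [lia|].
  unfold poly_eval. rewrite lsum_seq, sum_lt_shift. simpl.
  rewrite (sum_lt_ext _ (fun _ => 0)) by (intros; simpl; ring).
  rewrite sum_lt_const. ring.
Qed.

Definition gf_weight (v j : nat) : R :=
  csc_coef v j * (2 ^ v * (/ 4) ^ j * PI ^ (2 * j)) * zeta (2 * (v - j)).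
Definition gf_coeff (v i : nat) : R := sum_lt (gf_weight v) (v - i).

Lemma GF_S_poly m v : (1 <= v)%nat -> (1 <= m)%nat ->
  GF_S m v = / (2 * INR m ^ 2) ^ v * (INR m ^ 2 - 1) * poly_eval (gf_coeff v) v (INR m ^ 2).
Proof.
  intros Hv Hm. assert (Hm0 : 0 < INR m) by (apply lt_0_INR; lia).
  rewrite Rmult_assoc. unfold gf_coeff. rewrite poly_eval_partial_sums.
  rewrite GF_S_G_expansion by auto. rewrite <- sum_lt_scal. apply sum_lt_ext. intros j Hj.
  unfold gf_weight.
  pose proof (GF_scale (INR m) (v - j) j ltac:(lra)) as E.
  replace (v - j + j)%nat with v in E by lia.
  rewrite (pow_mult (INR m) 2 (v - j)).
  transitivity (((PI / (2 * INR m)) ^ (2 * v) * (2 / PI) ^ (2 * (v - j))) * csc_coef v j *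
                zeta (2 * (v - j)) * ((INR m ^ 2) ^ (v - j) - 1)); [ring|].
  rewrite E. ring.
Qed.

Lemma gf_coeff_last v : (1 <= v)%nat -> gf_coeff v (v - 1) = 2 ^ v * zeta (2 * v).
Proof.
  intros Hv. unfold gf_coeff. replace (v - (v - 1))%nat with 1%nat by lia. simpl. unfold gf_weight.
  rewrite csc_coef_0 by auto. replace (2 * (v - 0))%nat with (2 * v)%nat by lia. simpl. ring.
Qed.

Lemma gf_coeff_0 v :
  gf_coeff v 0 =
  2 ^ v / INR (fact (2 * v - 1)) *
  lsum (fun j => PI ^ (2 * j) * s_sym v j * INR (fact (2 * v - 2 * j - 1)) * zeta (2 * v - 2 * j))
       (seq 0 v).
Proof.
  unfold gf_coeff. rewrite lsum_seq, Nat.sub_0_r.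
  unfold Rdiv. rewrite Rmult_assoc, <- !sum_lt_scal.
  apply sum_lt_ext. intros j Hj. simpl Nat.add. unfold gf_weight, csc_coef.
  replace (2 * (v - j))%nat with (2 * v - 2 * j)%nat by lia.
  pose proof (INR_fact_pos (2 * v - 1)).
  replace (4 ^ j) with (/ (/ 4) ^ j) by (rewrite pow_inv, Rinv_inv; reflexivity).
  assert ((/ 4) ^ j <> 0) by (apply pow_nonzero; lra).
  field. split; lra.
Qed.

Theorem mainTheorem4 :
  forall v : nat, (1 <= v)%nat ->
  exists c : nat -> R,
    c (v - 1)%nat <> 0 /\
    (forall m : nat, (1 <= m)%nat ->
       GF_S m v =
       / (2 * INR m ^ 2) ^ v * (INR m ^ 2 - 1) * poly_eval c v (INR m ^ 2)) /\
    c (v - 1)%nat = 2 ^ v * zeta (2 * v) /\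
    poly_eval c v 0 =
      2 ^ v / INR (fact (2 * v - 1)) *
      lsum (fun j => PI ^ (2 * j) * s_sym v j
                     * INR (fact (2 * v - 2 * j - 1)) * zeta (2 * v - 2 * j))
           (seq 0 v).
Proof.
  intros v Hv. exists (gf_coeff v). split; [|split; [|split]].
  - rewrite gf_coeff_last by auto.
    apply Rgt_not_eq, Rmult_lt_0_compat; [apply pow_lt; lra|apply zeta_pos; lia].
  - intros m Hm. apply GF_S_poly; auto.
  - apply gf_coeff_last; auto.
  - rewrite poly_eval_0 by auto. apply gf_coeff_0.
Qed.
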